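(* Let $m\ge 2$. Consider either (i) $\xi=\operatorname{diam}$ and $\zeta$ the covering radius $\zeta(\Lambda)=\inf\{t>0:\Lambda+t\mathbf{B}=\mathbb{R}^m\}$, in the undirected case ($\mathcal{G}=C_{\mathbb{Z}^m/\Lambda}(I)$) or the directed case ($\mathcal{G}=C^+_{\mathbb{Z}^m/\Lambda}(I)$) with the corresponding $\mathbf{B}$; or (ii) the directed case, $\xi=\operatorname{girth}$ and $\zeta(\Lambda)=\inf\{t>0:t\mathbf{B}\cap\Lambda\neq\{0\}\}$. Then there is a constant $C$ such that for every finite index subgroup $\Lambda<\mathbb{Z}^m$, $|\xi(\mathcal{G})-\zeta(\Lambda)|\le C$ and $\big||\Lambda|^{-1/m}\xi(\mathcal{G})-\zeta(\bar\Lambda)\big|\le C|\Lambda|^{-1/m}$.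
   Context: $I$ is the standard basis of $\mathbb{Z}^m$; $C_{\mathbb{Z}^m/\Lambda}(I)$ is the Cayley graph of $\mathbb{Z}^m/\Lambda$ with respect to the images of the standard basis vectors ($x$ adjacent to $x+e_j$), and $C^+_{\mathbb{Z}^m/\Lambda}(I)$ the Cayley digraph (edges $x\to x+e_j$), with directed path distance. The diameter is the maximum distance between vertices (ordered pairs in the directed case); the girth of a digraph is the length of a shortest directed cycle. $|\Lambda|$ is the covolume (index) of $\Lambda$ and $\bar\Lambda=|\Lambda|^{-1/m}\Lambda$. $\mathbf{B}=\{v\in\mathbb{R}^m:\sum|v_i|<1\}$ in the undirected case and $\mathbf{B}=\{v\in\mathbb{R}^m:v_i\ge0\ \forall i,\ \sum v_i<1\}$ in the directed case. *)

From mathcomp Require Import all_boot all_order all_algebra.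
From mathcomp Require Import all_classical all_reals all_analysis.
Set Implicit Arguments. Unset Strict Implicit. Unset Printing Implicit Defensive.
Import Order.TTheory GRing.Theory Num.Theory.
Local Open Scope classical_set_scope.
Local Open Scope ring_scope.

Section Defs.
Variable m : nat.

Definition is_subgroup (L : set 'rV[int]_m) : Prop :=
  L 0 /\ forall x y, L x -> L y -> L (x - y).

(* s is a complete system of pairwise distinct coset representatives of L,
   so (size s) = [Z^m : L] = |L| (covolume/index); its existence is the
   finite-index hypothesis. *)
Definition transversal (L : set 'rV[int]_m) (s : seq 'rV[int]_m) : Prop :=
  (forall x, exists2 r, r \in s & L (x - r)) /\
  (forall i j, (i < size s)%N -> (j < size s)%N ->
      L (nth 0 s i - nth 0 s j) -> i = j).

Definition ustep (p : 'I_m * bool) : 'rV[int]_m :=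
  if p.2 then - delta_mx 0 p.1 else delta_mx 0 p.1.
Definition dstep (j : 'I_m) : 'rV[int]_m := delta_mx 0 j.

Variable R : realType.

(* Path distance in the Cayley graph C_{Z^m/L}(I) between the cosets x+L and
   y+L: least length of a walk x -> x +- e_j1 -> ... ending in the coset y+L. *)
Definition udist (L : set 'rV[int]_m) (x y : 'rV[int]_m) : R :=
  inf [set (size s)%:R | s in
        [set s : seq ('I_m * bool) | L (x + \sum_(p <- s) ustep p - y)]].

Definition ddist (L : set 'rV[int]_m) (x y : 'rV[int]_m) : R :=
  inf [set (size s)%:R | s in
        [set s : seq 'I_m | L (x + \sum_(j <- s) dstep j - y)]].

Definition udiam (L : set 'rV[int]_m) : R :=
  sup [set udist L xy.1 xy.2 | xy in [set: 'rV[int]_m * 'rV[int]_m]].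
Definition ddiam (L : set 'rV[int]_m) : R :=
  sup [set ddist L xy.1 xy.2 | xy in [set: 'rV[int]_m * 'rV[int]_m]].

(* Girth of the digraph: length of a shortest directed cycle, i.e. of a
   shortest nonempty closed directed walk. *)
Definition dgirth (L : set 'rV[int]_m) : R :=
  inf [set (size s)%:R | s in
        [set s : seq 'I_m | s != [::] /\ L (\sum_(j <- s) dstep j)]].

Definition latR (L : set 'rV[int]_m) : set 'rV[R]_m :=
  [set map_mx (fun z : int => z%:~R) x | x in L].
Definition scaleset (c : R) (A : set 'rV[R]_m) : set 'rV[R]_m :=
  [set c *: v | v in A].

Definition ballU : set 'rV[R]_m := [set v | \sum_i `|v 0 i| < 1].
Definition ballD : set 'rV[R]_m :=
  [set v | (forall i, 0 <= v 0 i) /\ \sum_i v 0 i < 1].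

Definition covrad (B : set 'rV[R]_m) (A : set 'rV[R]_m) : R :=
  inf [set t : R | 0 < t /\
        forall v : 'rV[R]_m, exists l b, A l /\ B b /\ v = l + t *: b].

Definition minrad (B : set 'rV[R]_m) (A : set 'rV[R]_m) : R :=
  inf [set t : R | 0 < t /\
        exists v b, A v /\ v != 0 /\ B b /\ v = t *: b].

Definition lemma_claim (xi : set 'rV[int]_m -> R)
    (zeta : set 'rV[R]_m -> R) : Prop :=
  exists C : R, forall (L : set 'rV[int]_m) (s : seq 'rV[int]_m),
    is_subgroup L -> transversal L s ->
    `|xi L - zeta (latR L)| <= C /\
    `|(size s)%:R `^ (- (m%:R)^-1) * xi L
        - zeta (scaleset ((size s)%:R `^ (- (m%:R)^-1)) (latR L))|
      <= C * (size s)%:R `^ (- (m%:R)^-1).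

End Defs.

From Pilot Require Import Defs.
From mathcomp Require Import all_boot all_order all_algebra.
From mathcomp Require Import all_classical all_reals all_analysis.
From mathcomp Require Import lra.
Set Implicit Arguments. Unset Strict Implicit. Unset Printing Implicit Defensive.
Import Order.TTheory GRing.Theory Num.Theory.
Local Open Scope classical_set_scope.
Local Open Scope ring_scope.

(* The Cayley (di)graph distance from x to y + L is the least number of
   generators summing into y - x + L.  Let g be the gauge of B: the l1 norm,
   resp. the coordinate sum on the nonnegative orthant.  A lattice vector w in
   the cone of g is a sum of exactly g(w) generators, and a sum of k generators
   has gauge at most k.  Hence the diameter is, up to the strictness of B, the
   least t with every lattice point in L + tB, while the covering radius asks
   this of every real point; rounding a real point down to the lattice costs
   gauge < m, so the two differ by at most m.  Everything scales with L, which
   gives the normalized bound.  For the girth, a shortest closed directed walk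
   is a nonzero vector of L in the orthant with least coordinate sum k, and it
   lies in tB exactly when t > k; hence the error is at most 1. *)

Section Subgroup.
Variables (m : nat) (L : set 'rV[int]_m).
Hypothesis hL : is_subgroup L.

Lemma subgroup0 : L 0. Proof. exact: hL.1. Qed.

Lemma subgroupB x y : L x -> L y -> L (x - y). Proof. exact: hL.2. Qed.

Lemma subgroupN x : L x -> L (- x).
Proof. by move=> Lx; rewrite -sub0r; exact: subgroupB subgroup0 Lx. Qed.

Lemma subgroupD x y : L x -> L y -> L (x + y).
Proof. by move=> Lx Ly; rewrite -[y]opprK; apply: subgroupB Lx (subgroupN Ly). Qed.

Lemma subgroupMn x k : L x -> L (x *+ k).
Proof.
move=> Lx; elim: k => [|k IH]; first by rewrite mulr0n; exact: subgroup0.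
by rewrite mulrS; exact: subgroupD.
Qed.

(* Pigeonhole: the |L| + 1 multiples 0, x, ..., |L| x cannot lie in |L|
   distinct cosets. *)
Lemma transversal_mulrn_mem s x : Defs.transversal L s ->
  exists2 d : nat, (0 < d)%N & L (x *+ d).
Proof.
move=> [hcov _].
have /choice[f hf] : forall k : 'I_(size s).+1,
    exists i : 'I_(size s), L (x *+ k - nth 0 s i).
  move=> k; have [r rs Lr] := hcov (x *+ k).
  by exists (Ordinal (etrans (index_mem r s) rs)); rewrite /= nth_index.
case: (pselect (exists2 d : nat, (0 < d)%N & L (x *+ d))) => // hno.
have /leq_card : injective f.
  move=> k1 k2 ef.
  have L12 : L (x *+ k1 - x *+ k2).
    have := subgroupB (hf k1) (hf k2); rewrite ef.
    by rewrite opprB addrA subrK.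
  case: (ltngtP k1 k2) => [lt|lt|/val_inj] //; exfalso; apply: hno.
  - exists (k2 - k1)%N; first by rewrite subn_gt0.
    by rewrite mulrnBr ?(ltnW lt) // -opprB; exact: subgroupN.
  - by exists (k1 - k2)%N; rewrite ?subn_gt0 // mulrnBr // ltnW.
by rewrite !card_ord ltnn.
Qed.

Lemma subgroup_const_mx_ge s N : Defs.transversal L s ->
  exists2 n : nat, (N <= n)%N & L (const_mx n%:Z).
Proof.
move=> /(transversal_mulrn_mem (const_mx 1))[d d_gt0 Ld].
exists (d * N)%N; first by rewrite leq_pmull.
suff -> : const_mx (d * N)%N%:Z = const_mx 1 *+ d *+ N :> 'rV[int]_m
  by exact: subgroupMn.
by apply/rowP => i; rewrite !mulmxnE !mxE -mulrnA natz.
Qed.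

End Subgroup.

Local Notation intrv := (map_mx (fun z : int => z%:~R)).

Definition floorv (R : realType) (m : nat) (u : 'rV[R]_m) : 'rV[int]_m :=
  \row_i Num.floor (u 0 i).

Lemma floorv_frac (R : realType) (m : nat) (u : 'rV[R]_m) i :
  0 <= (u - intrv (floorv u)) 0 i < 1.
Proof.
rewrite !mxE subr_ge0 floor_le_tmp /=.
by have := lt_succ_floor (u 0 i); rewrite intrD1; lra.
Qed.

Lemma latR_scaleP (R : realType) (m : nat) (L : set 'rV[int]_m) (c : R) v :
  scaleset c (latR (R:=R) L) v <-> exists2 l, L l & v = c *: intrv l.
Proof.
split; first by move=> [_ [l Ll <-] <-]; exists l.
by move=> [l Ll ->]; exists (intrv l) => //; exists l.
Qed.

Section GaugeCayley.
Variables (R : realType) (m : nat) (T : Type) (step : T -> 'rV[int]_m).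
Variables (B cone : set 'rV[R]_m) (gauge : 'rV[R]_m -> R).
Hypothesis ballE : forall b, B b <-> cone b /\ gauge b < 1.
Hypothesis coneD : forall a b, cone a -> cone b -> cone (a + b).
Hypothesis coneZ : forall k a, 0 <= k -> cone a -> cone (k *: a).
Hypothesis gaugeZ : forall k a, 0 <= k -> cone a -> gauge (k *: a) = k * gauge a.
Hypothesis gaugeD : forall a b, cone a -> cone b ->
  gauge (a + b) <= gauge a + gauge b.
Hypothesis gauge_ge0 : forall a, cone a -> 0 <= gauge a.
Hypothesis steps_exact : forall w, cone (intrv w) ->
  exists s, \sum_(p <- s) step p = w /\ (size s)%:R = gauge (intrv w).
Hypothesis steps_gauge : forall s, cone (intrv (\sum_(p <- s) step p)) /\
  gauge (intrv (\sum_(p <- s) step p)) <= (size s)%:R.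
Hypothesis frac_gauge : forall u : 'rV[R]_m,
  cone (u - intrv (floorv u)) /\ gauge (u - intrv (floorv u)) < m%:R.

(* [udist]/[ddist] and [udiam]/[ddiam] are these for [ustep]/[dstep],
   up to conversion. *)
Definition cayley_dist (L : set 'rV[int]_m) x y : R :=
  inf [set (size s)%:R | s in
        [set s : seq T | L (x + \sum_(p <- s) step p - y)]].
Definition cayley_diam (L : set 'rV[int]_m) : R :=
  sup [set cayley_dist L xy.1 xy.2 | xy in [set: 'rV[int]_m * 'rV[int]_m]].

Variables (L : set 'rV[int]_m) (c : R).
Hypothesis hL : is_subgroup L.
Hypothesis c_gt0 : 0 < c.
Hypothesis cone_transversal : exists K, forall z,
  exists2 l, L l & cone (intrv (z - l)) /\ gauge (intrv (z - l)) <= K.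

Definition covering (t : R) := 0 < t /\ forall v : 'rV[R]_m,
  exists l b, scaleset c (latR (R:=R) L) l /\ B b /\ v = l + t *: b.

Lemma cayley_walk_mem x y w : L (y - x - w) -> L (x + w - y).
Proof. by move/(subgroupN hL); rewrite !opprB addrCA addrA. Qed.

Lemma cayley_dist_le x y s : L (x + \sum_(p <- s) step p - y) ->
  cayley_dist L x y <= (size s)%:R.
Proof.
move=> Ls; apply: ge_inf; last by exists s.
by exists 0 => _ [s' _ <-]; exact: ler0n.
Qed.

Lemma cayley_dist_gauge x y l : L l -> cone (intrv (y - x - l)) ->
  cayley_dist L x y <= gauge (intrv (y - x - l)).
Proof.
move=> Ll /steps_exact[s [es <-]]; apply/cayley_dist_le/cayley_walk_mem.
by rewrite es subKr.
Qed.

Lemma cayley_dist_walk x y :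
  exists s, L (x + \sum_(p <- s) step p - y).
Proof.
have [K /(_ (y - x))[l Ll [/steps_exact[s [es _]] _]]] := cone_transversal.
by exists s; apply: cayley_walk_mem; rewrite es subKr.
Qed.

Lemma cayley_dist_adherent x y e : 0 < e -> exists2 s : seq T,
  L (x + \sum_(p <- s) step p - y) & (size s)%:R < cayley_dist L x y + e.
Proof.
move=> e0; rewrite /cayley_dist.
have [|_ [s Ls <-] lt_s] := inf_adherent (E := [set (size s)%:R | s in
  [set s : seq T | L (x + \sum_(p <- s) step p - y)]]) e0; last by exists s.
split; first by have [s Ls] := cayley_dist_walk x y; exists (size s)%:R, s.
by exists 0 => _ [s' _ <-]; exact: ler0n.
Qed.

Lemma covering_cayley_dist t x y : covering t -> c * cayley_dist L x y <= t.
Proof.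
move=> [t_gt0 cov].
have [a [b [/latR_scaleP[l Ll ->] [/ballE[cone_b gauge_b] e]]]] :=
  cov (c *: intrv (y - x)).
have tc_ge0 : 0 <= t / c by rewrite divr_ge0 // ltW.
have el : intrv (y - x - l) = (t / c) *: b.
  apply: (scalerI (lt0r_neq0 c_gt0)).
  rewrite map_mxB scalerBr e addrC addKr scalerA.
  by rewrite mulrCA mulfV ?lt0r_neq0 ?mulr1.
have := @cayley_dist_gauge x y l Ll.
rewrite el gaugeZ // => /(_ (coneZ tc_ge0 cone_b)).
move=> /(ler_wpM2l (ltW c_gt0)) /le_trans; apply.
rewrite mulrA (mulrC c) mulfVK ?lt0r_neq0 //.
by apply: ler_piMr; exact: ltW.
Qed.

Lemma covering_gauge K :
  (forall u, exists2 l, L l & cone (u - intrv l) /\ gauge (u - intrv l) < K) ->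
  covering (c * K).
Proof.
move=> near_lat; have K_gt0 : 0 < K.
  have [l _ [cone_l lt_K]] := near_lat 0.
  exact: le_lt_trans (gauge_ge0 cone_l) lt_K.
split=> [|v]; first exact: mulr_gt0.
have [l Ll [cone_ul gauge_ul]] := near_lat (c^-1 *: v).
exists (c *: intrv l), (K^-1 *: (c^-1 *: v - intrv l)).
split; first by apply/latR_scaleP; exists l.
split.
  apply/ballE; split; first by apply: coneZ => //; rewrite invr_ge0 ltW.
  by rewrite gaugeZ ?invr_ge0 ?ltW // mulrC ltr_pdivrMr // mul1r.
rewrite scalerA -mulrA mulfV ?lt0r_neq0 // mulr1 scalerBr scalerA.
by rewrite mulfV ?lt0r_neq0 // scale1r addrCA subrr addr0.
Qed.

(* Round to the lattice first, then to a point of L + cone. *)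
Lemma covering_exists : exists t, covering t.
Proof.
have [K near_lat] := cone_transversal.
exists (c * (K + m%:R)); apply: covering_gauge => u.
have [l Ll [cone_l gauge_l]] := near_lat (floorv u).
have [cone_f gauge_f] := frac_gauge u.
exists l => //; rewrite -[u](subrK (intrv (floorv u))) -addrA -map_mxB.
split; first exact: coneD.
by apply: (le_lt_trans (gaugeD cone_f cone_l)); rewrite addrC ler_ltD.
Qed.

Lemma cayley_dist_le_diam x y : cayley_dist L x y <= cayley_diam L.
Proof.
apply: ub_le_sup; last by exists (x, y).
have [t cov_t] := covering_exists; exists (t / c) => _ [[x' y'] _ <-] /=.
by rewrite ler_pdivlMr // mulrC; exact: covering_cayley_dist.
Qed.

Lemma cayley_diam_le_covrad :
  c * cayley_diam L <= covrad B (scaleset c (latR (R:=R) L)).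
Proof.
apply: lb_le_inf; first exact: covering_exists.
move=> t cov_t; rewrite mulrC -ler_pdivlMr //.
apply: ge_sup; first by exists (cayley_dist L 0 0), (0, 0).
move=> _ [[x y] _ <-] /=; rewrite ler_pdivlMr // mulrC.
exact: covering_cayley_dist.
Qed.

(* A point u is within gauge < m of the lattice point floorv u, which is
   reached from 0 by a walk of length about its distance, at most the diameter. *)
Lemma covrad_le_cayley_diam :
  covrad B (scaleset c (latR (R:=R) L)) <= c * (cayley_diam L + m%:R).
Proof.
apply: ge_inf; first by exists 0 => t [t_gt0 _]; exact: ltW.
apply: covering_gauge => u.
set z := floorv u; have [cone_f gauge_f] := frac_gauge u.
have [s Ls lt_s] : exists2 s : seq T, L (0 + \sum_(p <- s) step p - z) &
    (size s)%:R < cayley_dist L 0 z + (m%:R - gauge (u - intrv z)).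
  by apply: cayley_dist_adherent; rewrite subr_gt0.
exists (z - \sum_(p <- s) step p).
  by rewrite -opprB -[X in X - z]add0r; exact: subgroupN.
have [cone_s gauge_s] := steps_gauge s.
rewrite map_mxB opprB addrCA addrC; split; first exact: coneD.
apply: (le_lt_trans (gaugeD cone_f cone_s)).
have := cayley_dist_le_diam 0 z; lra.
Qed.

Lemma cayley_diam_covrad :
  `|c * cayley_diam L - covrad B (scaleset c (latR (R:=R) L))| <= c * m%:R.
Proof.
have := cayley_diam_le_covrad; have := covrad_le_cayley_diam.
rewrite mulrDr ler_norml; lra.
Qed.

End GaugeCayley.

Lemma big_flatten_nseq (I T : Type) (V : nmodType) (F : T -> V)
    (k : I -> nat) (f : I -> T) (r : seq I) :
  \sum_(p <- flatten [seq nseq (k i) (f i) | i <- r]) F p =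
  \sum_(i <- r) F (f i) *+ k i.
Proof.
by rewrite big_flatten big_map; apply: eq_bigr => i _; rewrite big_nseq iter_addr_0.
Qed.

Lemma size_flatten_nseq (I T : Type) (k : I -> nat) (f : I -> T) (r : seq I) :
  size (flatten [seq nseq (k i) (f i) | i <- r]) = (\sum_(i <- r) k i)%N.
Proof.
rewrite size_flatten sumnE /shape -map_comp big_map.
by apply: eq_bigr => i _; rewrite /= size_nseq.
Qed.

Section Gauges.
Variables (R : realType) (m : nat).

Definition norm1 (v : 'rV[R]_m) : R := \sum_i `|v 0 i|.
Definition coord_sum (v : 'rV[R]_m) : R := \sum_i v 0 i.
Definition orthant : set 'rV[R]_m := [set v | forall i, 0 <= v 0 i].

Lemma norm1_ge0 v : 0 <= norm1 v.
Proof. exact: sumr_ge0. Qed.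

Lemma norm1_coord (v : 'rV[R]_m) i : `|v 0 i| <= norm1 v.
Proof. by rewrite /norm1 (bigD1 i) //= lerDl sumr_ge0. Qed.

Lemma norm1D a b : norm1 (a + b) <= norm1 a + norm1 b.
Proof.
by rewrite /norm1 -big_split /=; apply: ler_sum => i _; rewrite mxE ler_normD.
Qed.

Lemma norm1Z k a : 0 <= k -> norm1 (k *: a) = k * norm1 a.
Proof.
move=> k_ge0; rewrite /norm1 mulr_sumr.
by apply: eq_bigr => i _; rewrite mxE normrM ger0_norm.
Qed.

Lemma coord_sumD a b : coord_sum (a + b) = coord_sum a + coord_sum b.
Proof. by rewrite /coord_sum -big_split; apply: eq_bigr => i _; rewrite mxE. Qed.

Lemma coord_sumZ k a : coord_sum (k *: a) = k * coord_sum a.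
Proof. by rewrite /coord_sum mulr_sumr; apply: eq_bigr => i _; rewrite mxE. Qed.

Lemma coord_sum_const (x : R) : coord_sum (const_mx x) = x *+ m.
Proof.
by rewrite /coord_sum (eq_bigr (fun=> x)) ?sumr_const ?card_ord // => i _; rewrite mxE.
Qed.

Lemma coord_sum_le_norm1 v : coord_sum v <= norm1 v.
Proof. by apply: ler_sum => i _; exact: ler_norm. Qed.

Lemma orthantD a b : orthant a -> orthant b -> orthant (a + b).
Proof. by move=> ha hb i; rewrite mxE addr_ge0. Qed.

Lemma orthantZ k a : 0 <= k -> orthant a -> orthant (k *: a).
Proof. by move=> k_ge0 ha i; rewrite mxE mulr_ge0. Qed.

Lemma coord_sum_ge0 a : orthant a -> 0 <= coord_sum a.
Proof. by move=> ha; exact: sumr_ge0. Qed.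

Lemma norm1_orthant v : orthant v -> norm1 v = coord_sum v.
Proof. by move=> hv; apply: eq_bigr => i _; rewrite ger0_norm. Qed.

Lemma orthant_frac u : orthant (u - intrv (floorv u)).
Proof. by move=> i; have /andP[] := floorv_frac u i. Qed.

Lemma coord_sum_frac u : (0 < m)%N -> coord_sum (u - intrv (floorv u)) < m%:R.
Proof.
move=> m_gt0; rewrite -[X in _ < X%:R]card_ord -sumr_const.
apply: ltr_sum => [|i _]; last by have /andP[] := floorv_frac u i.
by apply/hasP; exists (Ordinal m_gt0); rewrite ?mem_index_enum.
Qed.

Lemma intrv_delta j : intrv (delta_mx 0 j : 'rV[int]_m) = delta_mx 0 j :> 'rV[R]_m.
Proof. by apply/rowP => i; rewrite !mxE; case: (_ && _). Qed.

Lemma norm1N v : norm1 (- v) = norm1 v.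
Proof. by apply: eq_bigr => i _; rewrite mxE normrN. Qed.

Lemma norm1_delta j : norm1 (delta_mx 0 j) = 1.
Proof.
rewrite /norm1 (bigD1 j) //= big1 => [|i ji]; first by rewrite !mxE !eqxx normr1 addr0.
by rewrite !mxE (negbTE ji) andbF normr0.
Qed.

Lemma norm1_ustep p : norm1 (intrv (ustep p)) = 1.
Proof.
case: p => j b; rewrite /ustep /= (fun_if intrv) map_mxN intrv_delta.
by case: b; rewrite ?norm1N norm1_delta.
Qed.

Lemma coord_sum_delta j : coord_sum (delta_mx 0 j) = 1.
Proof. by rewrite -norm1_orthant ?norm1_delta // => i; rewrite mxE ler0n. Qed.

Lemma ustep_sum_norm1 s : norm1 (intrv (\sum_(p <- s) ustep p)) <= (size s)%:R.
Proof.
elim: s => [|p s IH].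
  by rewrite big_nil map_mx0 /norm1 big1 // => i _; rewrite mxE normr0.
rewrite big_cons map_mxD /= mulrS.
by apply: (le_trans (norm1D _ _)); rewrite norm1_ustep lerD2l.
Qed.

Lemma ustep_decomposition (w : 'rV[int]_m) : exists s : seq ('I_m * bool),
  \sum_(p <- s) ustep p = w /\ (size s)%:R = norm1 (intrv w).
Proof.
exists (flatten [seq nseq `|w 0 i| (i, w 0 i < 0) | i <- index_enum 'I_m]); split.
  rewrite big_flatten_nseq [RHS]row_sum_delta; apply: eq_bigr => i _.
  rewrite /ustep /= -scaler_nat; case: ltrP => [w_lt0|w_ge0].
    by rewrite scalerN -scaleNr natr_absz intz ltr0_norm ?opprK.
  by rewrite natr_absz intz ger0_norm.
rewrite size_flatten_nseq natr_sum; apply: eq_bigr => i _.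
by rewrite mxE natr_absz intr_norm.
Qed.

Lemma dstep_sum_orthant s : orthant (intrv (\sum_(j <- s) dstep j)).
Proof.
by move=> i; rewrite !mxE summxE ler0z sumr_ge0 // => j _; rewrite mxE ler0n.
Qed.

Lemma coord_sum_dstep s : coord_sum (intrv (\sum_(j <- s) dstep j)) = (size s)%:R.
Proof.
elim: s => [|j s IH].
  by rewrite big_nil map_mx0 /coord_sum big1 // => i _; rewrite mxE.
by rewrite big_cons map_mxD coord_sumD IH intrv_delta coord_sum_delta mulrS.
Qed.

Lemma dstep_decomposition (w : 'rV[int]_m) : orthant (intrv w) ->
  exists s : seq 'I_m, \sum_(j <- s) dstep j = w /\ (size s)%:R = coord_sum (intrv w).
Proof.
move=> w_ge0; exists (flatten [seq nseq `|w 0 i| i | i <- index_enum 'I_m]).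
have w_ge0' i : 0 <= w 0 i by have := w_ge0 i; rewrite mxE ler0z.
split.
  rewrite big_flatten_nseq [RHS]row_sum_delta; apply: eq_bigr => i _.
  by rewrite /dstep -scaler_nat natr_absz intz ger0_norm.
rewrite size_flatten_nseq natr_sum; apply: eq_bigr => i _.
by rewrite mxE natr_absz intr_norm ger0_norm ?ler0z.
Qed.

Lemma transversal_norm1_bounded L s : Defs.transversal L s ->
  exists K, forall z, exists2 l, L l & norm1 (intrv (z - l)) <= K.
Proof.
move=> [cover _]; exists (\sum_(r <- s) norm1 (intrv r)) => z.
have [r rs Lzr] := cover z; exists (z - r) => //; rewrite subKr.
by rewrite (big_rem r rs) /= lerDl sumr_ge0 // => *; exact: norm1_ge0.
Qed.

(* Shift a bounded transversal by a large diagonal vector of L. *)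
Lemma transversal_orthant_bounded L s : is_subgroup L -> Defs.transversal L s ->
  exists K, forall z, exists2 l, L l &
    orthant (intrv (z - l)) /\ coord_sum (intrv (z - l)) <= K.
Proof.
move=> hL hs; have [K near_lat] := transversal_norm1_bounded hs.
have K_ge0 : 0 <= K by have [l _] := near_lat 0; apply: le_trans; exact: norm1_ge0.
have [n le_bound Ln] := subgroup_const_mx_ge hL (Num.bound K) hs.
have K_le_n : K <= n%:R.
  by apply: le_trans (ltW (archi_boundP K_ge0)) _; rewrite ler_nat.
exists (K + n%:R *+ m) => z; have [l Ll le_K] := near_lat z.
exists (l - const_mx n%:Z); first exact: subgroupB.
rewrite opprB addrCA addrC map_mxD map_const_mx; set v := map_mx _ (z - l).
split.
  move=> i; have /lerNnormlW := le_trans (norm1_coord v i) le_K.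
  by rewrite !mxE; lra.
rewrite coord_sumD coord_sum_const lerD2r.
exact: le_trans (coord_sum_le_norm1 _) le_K.
Qed.

End Gauges.

Section DirectedGirth.
Variables (R : realType) (m : nat) (L : set 'rV[int]_m) (s0 : seq 'rV[int]_m) (c : R).
Hypotheses (m_gt0 : (0 < m)%N) (hL : is_subgroup L) (hs : Defs.transversal L s0).
Hypothesis c_gt0 : 0 < c.

Let meets_lattice (t : R) := 0 < t /\ exists v b,
  scaleset c (latR (R:=R) L) v /\ v != 0 /\ ballD b /\ v = t *: b.

Lemma dcycle_exists : exists s : seq 'I_m, s != [::] /\ L (\sum_(j <- s) dstep j).
Proof.
have [n n_gt0 Ln] := subgroup_const_mx_ge hL 1 hs.
have n_orthant : orthant (intrv (const_mx n%:Z : 'rV[int]_m) : 'rV[R]_m).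
  by move=> i; rewrite !mxE ler0n.
have [s [sum_s size_s]] := dstep_decomposition n_orthant.
exists s; rewrite sum_s; split=> //.
rewrite -size_eq0 -lt0n -(ltr0n R) size_s map_const_mx coord_sum_const.
by rewrite pmulrn_lgt0 // ltr0z.
Qed.

Lemma meets_lattice_cycle s : s != [::] -> L (\sum_(j <- s) dstep j) ->
  meets_lattice (c * ((size s)%:R + 1)).
Proof.
move=> s_neq0 Ls; set w := \sum_(j <- s) dstep j; set t := c * _.
have t_gt0 : 0 < t by rewrite mulr_gt0 // ltr_wpDl.
have size_gt0 : 0 < (size s)%:R :> R by rewrite ltr0n lt0n size_eq0.
split=> //; exists (c *: intrv w), (t^-1 *: (c *: intrv w)).
split; first by apply/latR_scaleP; exists w.
split.
  apply: contraTneq size_gt0 => /(congr1 (@coord_sum R m)).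
  rewrite coord_sumZ coord_sum_dstep /coord_sum big1 => [/eqP|i _]; last first.
    by rewrite mxE.
  by rewrite mulf_eq0 gt_eqF //= => /eqP->; rewrite ltxx.
split; last by rewrite scalerA mulfV ?gt_eqF // scale1r.
split; first by apply/orthantZ/orthantZ/dstep_sum_orthant; rewrite ?invr_ge0 ltW.
rewrite -/(coord_sum _) !coord_sumZ coord_sum_dstep mulrC ltr_pdivrMr //.
by rewrite mul1r /t ltr_pM2l // ltrDl.
Qed.

Lemma dgirth_le_cycle s : s != [::] -> L (\sum_(j <- s) dstep j) ->
  @dgirth m R L <= (size s)%:R.
Proof.
move=> s_neq0 Ls; apply: ge_inf; last by exists s.
by exists 0 => _ [s' _ <-]; exact: ler0n.
Qed.

Lemma dgirth_le_meets_lattice t : meets_lattice t -> c * @dgirth m R L <= t.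
Proof.
move=> [t_gt0 [_ [b [/latR_scaleP[l Ll ->] [l_neq0 [[b_orthant b_lt1] e]]]]]].
have tc_ge0 : 0 <= t / c by rewrite divr_ge0 // ltW.
have el : intrv l = (t / c) *: b.
  apply: (scalerI (lt0r_neq0 c_gt0)).
  by rewrite e scalerA mulrCA mulfV ?gt_eqF ?mulr1.
have l_orthant : orthant (intrv l : 'rV[R]_m) by rewrite el; exact: orthantZ.
have [s [sum_s size_s]] := dstep_decomposition l_orthant.
have s_neq0 : s != [::].
  by apply: contra_neq l_neq0 => s_nil; rewrite -sum_s s_nil big_nil map_mx0 scaler0.
have := dgirth_le_cycle s_neq0; rewrite sum_s size_s el coord_sumZ => /(_ Ll).
move=> /(ler_wpM2l (ltW c_gt0)) /le_trans; apply.
rewrite mulrA (mulrC c) mulfVK ?gt_eqF //.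
by apply: ler_piMr; exact: ltW.
Qed.

Lemma dgirth_minrad :
  `|c * @dgirth m R L - minrad (@ballD m R) (scaleset c (latR (R:=R) L))| <= c.
Proof.
have [s [s_neq0 Ls]] := dcycle_exists.
set mr := minrad _ _.
have girth_le : c * @dgirth m R L <= mr.
  apply: lb_le_inf; last exact: dgirth_le_meets_lattice.
  by exists (c * ((size s)%:R + 1)); exact: meets_lattice_cycle.
have le_girth : mr <= c * (@dgirth m R L + 1).
  rewrite -ler_pdivrMl // -lerBlDr; apply: lb_le_inf.
    by exists (size s)%:R, s.
  move=> _ [s' [s'_neq0 Ls'] <-]; rewrite lerBlDr ler_pdivrMl //.
  by apply: ge_inf; [exists 0 => t [t_gt0 _]; exact: ltW | exact: meets_lattice_cycle].
by move: le_girth; rewrite mulrDr mulr1 ler_norml => ?; apply/andP; split; lra.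
Qed.

End DirectedGirth.

Section Instances.
Variables (R : realType) (m : nat) (L : set 'rV[int]_m) (s : seq 'rV[int]_m) (c : R).
Hypotheses (m_gt0 : (0 < m)%N) (hL : is_subgroup L) (hs : Defs.transversal L s).
Hypothesis c_gt0 : 0 < c.

Lemma udiam_covrad :
  `|c * @udiam m R L - covrad (@ballU m R) (scaleset c (latR (R:=R) L))| <= c * m%:R.
Proof.
apply: (@cayley_diam_covrad R m _ (@ustep m) _ setT (@norm1 R m)) => //.
- by move=> b; split=> [|[]].
- by move=> k a k_ge0 _; exact: norm1Z.
- by move=> a b _ _; exact: norm1D.
- by move=> a _; exact: norm1_ge0.
- by move=> w _; exact: ustep_decomposition.
- by move=> s'; split=> //; exact: ustep_sum_norm1.
- move=> u; split=> [//|].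
  by rewrite norm1_orthant ?coord_sum_frac //; exact: orthant_frac.
- have [K near_lat] := transversal_norm1_bounded R hs.
  by exists K => z; have [l Ll le_K] := near_lat z; exists l.
Qed.

Lemma ddiam_covrad :
  `|c * @ddiam m R L - covrad (@ballD m R) (scaleset c (latR (R:=R) L))| <= c * m%:R.
Proof.
apply: (@cayley_diam_covrad R m _ (@dstep m) _ (@orthant R m) (@coord_sum R m)) => //.
- exact: orthantD.
- exact: orthantZ.
- by move=> k a _ _; exact: coord_sumZ.
- by move=> a b _ _; rewrite coord_sumD.
- exact: coord_sum_ge0.
- exact: dstep_decomposition.
- by move=> s'; rewrite coord_sum_dstep; split=> //; exact: dstep_sum_orthant.
- by move=> u; split; [exact: orthant_frac | exact: coord_sum_frac].
- exact: transversal_orthant_bounded hL hs.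
Qed.

End Instances.

Lemma lemma_claim_scaled (R : realType) (m : nat) (xi : set 'rV[int]_m -> R)
    (zeta : set 'rV[R]_m -> R) (C : R) :
  (forall L s (c : R), is_subgroup L -> Defs.transversal L s -> 0 < c ->
     `|c * xi L - zeta (scaleset c (latR (R:=R) L))| <= c * C) ->
  lemma_claim xi zeta.
Proof.
move=> scaled; exists C => L s hL hs; split.
  have := scaled L s 1 hL hs ltr01; rewrite !mul1r.
  suff -> : scaleset 1 (latR (R:=R) L) = latR L by [].
  by rewrite /scaleset; under eq_imagel do rewrite scale1r; rewrite image_id.
rewrite [C * _]mulrC; apply: (scaled L s) => //.
apply: powR_gt0; rewrite ltr0n lt0n size_eq0.
by have [r rs _] := hs.1 0; apply: contraTneq rs => ->.
Qed.

Theorem lemma3p3 (R : realType) (m : nat) (hm : (2 <= m)%N) :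
  (* (i) undirected: diameter vs covering radius for the cross-polytope *)
  lemma_claim (@udiam m R) (@covrad m R (@ballU m R)) /\
  (* (i) directed: diameter vs covering radius for the simplex *)
  lemma_claim (@ddiam m R) (@covrad m R (@ballD m R)) /\
  (* (ii) directed: girth vs first minimum for the simplex *)
  lemma_claim (@dgirth m R) (@minrad m R (@ballD m R)).
Proof.
have m_gt0 : (0 < m)%N := ltnW hm.
split; [|split].
- apply: (lemma_claim_scaled (C := m%:R)) => L s c hL hs c_gt0.
  exact: udiam_covrad m_gt0 hL hs c_gt0.
- apply: (lemma_claim_scaled (C := m%:R)) => L s c hL hs c_gt0.
  exact: ddiam_covrad m_gt0 hL hs c_gt0.
- apply: (lemma_claim_scaled (C := 1)) => L s c hL hs c_gt0.
  by rewrite mulr1; exact: dgirth_minrad m_gt0 hL hs c_gt0.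
Qed.
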